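(* Let $X,Y$ be $L$-topological spaces and $f:X\to Y$ a continuous map. Then $f$ is a quasihomeomorphism if and only if the map ${\rm pt}_L\mathcal O(f):{\rm pt}_L\mathcal O(X)\to{\rm pt}_L\mathcal O(Y)$, $p\mapsto p\circ f^\leftarrow$, is a homeomorphism (with respect to the spectral $L$-topologies).
   Context: $L$ is a frame. $L$-subsets of $X$ are maps $X\to L$; $a_X$ constant. An $L$-topology on $X$ is $\mathcal O(X)\subseteq L^X$ closed under finite meets and arbitrary joins containing all constants; $f$ continuous if $f^\leftarrow(B)=B\circ f$ is open for every open $B$; here $f^\leftarrow$ is regarded as a map $\mathcal O(Y)\to\mathcal O(X)$. $f$ is a quasihomeomorphism if $f^\leftarrow:\mathcal O(Y)\to\mathcal O(X)$ is a bijection. A point of $\mathcal O(X)$ is $p:\mathcal O(X)\to L$ preserving binary meets and arbitrary joins with $p(\lambda_X)=\lambda$ for all $\lambda\in L$; ${\rm pt}_L\mathcal O(X)$ is the set of points, carrying the spectral $L$-topology $\{\phi(A):A\in\mathcal O(X)\}$ with $\phi(A)(p)=p(A)$. A homeomorphism is a bijection that is continuous with continuous inverse. *)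

Set Implicit Arguments.
Unset Strict Implicit.

Record frame := Frame {
  fcar :> Type;
  fle : fcar -> fcar -> Prop;
  fmeet : fcar -> fcar -> fcar;
  fsup : (fcar -> Prop) -> fcar;
  fle_refl : forall a, fle a a;
  fle_trans : forall a b c, fle a b -> fle b c -> fle a c;
  fle_antisym : forall a b, fle a b -> fle b a -> a = b;
  fmeet_glb : forall a b c, fle c (fmeet a b) <-> (fle c a /\ fle c b);
  fsup_lub : forall (S : fcar -> Prop) c, fle (fsup S) c <-> (forall s, S s -> fle s c);
  fmeet_sup_distr : forall a (S : fcar -> Prop),
    fmeet a (fsup S) = fsup (fun y => exists s, S s /\ y = fmeet a s)
}.

Definition fjoin (L : frame) (I : Type) (F : I -> L) : L :=
  @fsup L (fun l => exists i, l = F i).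

Record ltop (L : frame) := LTop {
  lpts :> Type;
  lopen : (lpts -> L) -> Prop;
  lopen_const : forall l : L, lopen (fun _ => l);
  lopen_meet : forall A B, lopen A -> lopen B -> lopen (fun x => @fmeet L (A x) (B x));
  lopen_join : forall (I : Type) (F : I -> lpts -> L),
      (forall i, lopen (F i)) -> lopen (fun x => fjoin (fun i => F i x))
}.

Definition lcont (L : frame) (X Y : Type) (OX : (X -> L) -> Prop) (OY : (Y -> L) -> Prop)
  (f : X -> Y) : Prop :=
  forall B, OY B -> OX (fun x => B (f x)).

Definition continuous (L : frame) (X Y : ltop L) (f : X -> Y) : Prop :=
  lcont (@lopen L X) (@lopen L Y) f.

Definition lhomeo (L : frame) (X Y : Type) (OX : (X -> L) -> Prop) (OY : (Y -> L) -> Prop)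
  (g : X -> Y) : Prop :=
  exists h : Y -> X, (forall x, h (g x) = x) /\ (forall y, g (h y) = y) /\
    lcont OX OY g /\ lcont OY OX h.

Definition opens (L : frame) (X : ltop L) := { A : X -> L | @lopen L X A }.

Definition preimg (L : frame) (X Y : ltop L) (f : X -> Y) (hf : continuous f)
  (B : opens Y) : opens X :=
  exist _ (fun x => proj1_sig B (f x)) (hf (proj1_sig B) (proj2_sig B)).

Definition quasihomeo (L : frame) (X Y : ltop L) (f : X -> Y) (hf : continuous f) : Prop :=
  (forall B1 B2, preimg hf B1 = preimg hf B2 -> B1 = B2) /\
  (forall A : opens X, exists B, preimg hf B = A).

Definition is_point (L : frame) (X : ltop L) (p : opens X -> L) : Prop :=
  (forall (A B C : opens X),
      (forall x, proj1_sig C x = @fmeet L (proj1_sig A x) (proj1_sig B x)) ->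
      p C = @fmeet L (p A) (p B)) /\
  (forall (I : Type) (F : I -> opens X) (J : opens X),
      (forall x, proj1_sig J x = fjoin (fun i => proj1_sig (F i) x)) ->
      p J = fjoin (fun i => p (F i))) /\
  (forall (l : L) (C : opens X), (forall x, proj1_sig C x = l) -> p C = l).

Definition pt (L : frame) (X : ltop L) := { p : opens X -> L | is_point p }.

(** Spectral L-topology on pt_L O(X): { phi(A) | A in O(X) }, phi(A)(p) = p(A). *)
Definition spectral_open (L : frame) (X : ltop L) (Phi : pt X -> L) : Prop :=
  exists A : opens X, forall p : pt X, Phi p = proj1_sig p A.

Lemma point_comp_preimg (L : frame) (X Y : ltop L) (f : X -> Y) (hf : continuous f)
  (p : opens X -> L) : is_point p -> is_point (fun B => p (preimg hf B)).
Proof.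
  intros [Hm [Hj Hc]]. split; [|split].
  - intros A B C H. apply Hm. intro x. simpl. apply H.
  - intros I F J H. apply (Hj I (fun i => preimg hf (F i))). intro x. simpl. apply H.
  - intros l C H. apply Hc. intro x. simpl. apply H.
Qed.

Definition ptmap (L : frame) (X Y : ltop L) (f : X -> Y) (hf : continuous f)
  (p : pt X) : pt Y :=
  exist _ (fun B => proj1_sig p (preimg hf B)) (point_comp_preimg hf (proj2_sig p)).

(** When [f^<-] is a bijection, its inverse preserves meets, joins and
    constants too, because [f^<-] computes them pointwise and is injective.
    Precomposing points with [f^<-] and with its inverse then gives mutually
    inverse maps of spectra, each pulling [phi(A)] back to a spectral open.
    Conversely, evaluation at [x] is a point of [O(X)], which [pt_L O(f)]
    sends to evaluation at [f x]. Reaching the evaluation points makes [f^<-]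
    injective, and continuity of the inverse turns [phi(A)] into some [phi(B)]
    with [B (f x) = A x], i.e. [f^<- B = A]. *)
From Stdlib Require Import FunctionalExtensionality ProofIrrelevance IndefiniteDescription.

Lemma opens_eq (L : frame) (X : ltop L) (A B : opens X) :
  (forall x, proj1_sig A x = proj1_sig B x) -> A = B.
Proof.
  destruct A as [a ha], B as [b hb]; simpl; intro H.
  assert (a = b) by (apply functional_extensionality; exact H); subst.
  f_equal; apply proof_irrelevance.
Qed.

Lemma pt_eq (L : frame) (X : ltop L) (p q : pt X) :
  (forall A, proj1_sig p A = proj1_sig q A) -> p = q.
Proof.
  destruct p as [a ha], q as [b hb]; simpl; intro H.
  assert (a = b) by (apply functional_extensionality; exact H); subst.
  f_equal; apply proof_irrelevance.
Qed.

Section OpensOperations.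

Context {L : frame} {X : ltop L}.

Definition opens_meet (A B : opens X) : opens X :=
  exist _ (fun x => fmeet (proj1_sig A x) (proj1_sig B x))
    (lopen_meet (proj2_sig A) (proj2_sig B)).

Definition opens_join {I : Type} (F : I -> opens X) : opens X :=
  exist _ (fun x => fjoin (fun i => proj1_sig (F i) x))
    (lopen_join (fun i => proj2_sig (F i))).

Definition opens_const (l : L) : opens X := exist _ (fun _ => l) (lopen_const _ l).

Definition evpt (x : X) : pt X.
Proof.
  refine (exist _ (fun A : opens X => proj1_sig A x) _).
  split; [|split]; intros *; trivial.
Defined.

End OpensOperations.

Section InverseOfPreimage.

Context {L : frame} {X Y : ltop L} {f : X -> Y} (hf : continuous f).
Variable g : opens X -> opens Y.
Hypothesis preimgK : forall A, preimg hf (g A) = A.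
Hypothesis inv_preimgK : forall B, g (preimg hf B) = B.

Lemma inv_preimg_at (A : opens X) (x : X) : proj1_sig (g A) (f x) = proj1_sig A x.
Proof. now rewrite <- (preimgK A) at 2. Qed.

Lemma inv_preimg_eq (A : opens X) (V : opens Y) :
  (forall x, proj1_sig A x = proj1_sig V (f x)) -> g A = V.
Proof.
  intro HAV. rewrite <- (inv_preimgK V). f_equal. now apply opens_eq.
Qed.

Lemma is_point_comp_inv_preimg (q : opens Y -> L) :
  is_point q -> is_point (fun A => q (g A)).
Proof.
  intros [Qmeet [Qjoin Qconst]]; split; [|split].
  - intros A B C HC.
    rewrite (inv_preimg_eq C (opens_meet (g A) (g B))); [now apply Qmeet|].
    intro x; simpl. now rewrite HC, !inv_preimg_at.
  - intros I F J HJ.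
    rewrite (inv_preimg_eq J (opens_join (fun i => g (F i)))); [now apply Qjoin|].
    intro x; simpl. rewrite HJ. f_equal.
    apply functional_extensionality; intro i. symmetry; apply inv_preimg_at.
  - intros l C HC.
    rewrite (inv_preimg_eq C (opens_const (X := Y) l)); [now apply Qconst|].
    exact HC.
Qed.

Definition ptinv (q : pt Y) : pt X :=
  exist _ (fun A => proj1_sig q (g A)) (is_point_comp_inv_preimg _ (proj2_sig q)).

Lemma ptmap_homeo_of_inv_preimg :
  lhomeo (@spectral_open L X) (@spectral_open L Y) (ptmap hf).
Proof.
  exists ptinv; split; [|split; [|split]].
  - intro p. apply pt_eq; intro A; simpl. now rewrite preimgK.
  - intro q. apply pt_eq; intro B; simpl. now rewrite inv_preimgK.
  - intros Phi [B HB]. exists (preimg hf B). intro p. apply HB.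
  - intros Phi [A HA]. exists (g A). intro q. apply HA.
Qed.

End InverseOfPreimage.

Section PreimageOfPtmapHomeo.

Context {L : frame} {X Y : ltop L} {f : X -> Y} (hf : continuous f).

Lemma ptmap_evpt (x : X) : ptmap hf (evpt x) = evpt (f x).
Proof. now apply pt_eq. Qed.

Lemma preimg_inj_of_ptmap_surj :
  (forall q : pt Y, exists p, ptmap hf p = q) ->
  forall B1 B2, preimg hf B1 = preimg hf B2 -> B1 = B2.
Proof.
  intros Hsurj B1 B2 E. apply opens_eq; intro y.
  destruct (Hsurj (evpt y)) as [p Hp].
  change (proj1_sig (evpt y) B1 = proj1_sig (evpt y) B2).
  rewrite <- Hp; simpl. now rewrite E.
Qed.

Lemma preimg_surj_of_continuous_retraction (h : pt Y -> pt X) :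
  (forall p, h (ptmap hf p) = p) ->
  lcont (@spectral_open L Y) (@spectral_open L X) h ->
  forall A : opens X, exists B, preimg hf B = A.
Proof.
  intros hK Hcont A.
  destruct (Hcont (fun p => proj1_sig p A) (ex_intro _ A (fun _ => eq_refl))) as [B HB].
  exists B. apply opens_eq; intro x; simpl.
  change (proj1_sig (evpt (f x)) B = proj1_sig (evpt x) A).
  rewrite <- ptmap_evpt, <- HB. now rewrite hK.
Qed.

End PreimageOfPtmapHomeo.

Theorem proposition3p11 (L : frame) (X Y : ltop L) (f : X -> Y) (hf : continuous f) :
  quasihomeo hf <-> lhomeo (@spectral_open L X) (@spectral_open L Y) (ptmap hf).
Proof.
  split.
  - intros [Hinj Hsurj].
    destruct (functional_choice _ Hsurj) as [g preimgK].
    apply (ptmap_homeo_of_inv_preimg hf g preimgK).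
    intro B. apply Hinj, preimgK.
  - intros [h [hK [Kh [_ Hcont]]]]. split.
    + apply (preimg_inj_of_ptmap_surj hf). intro q. now exists (h q).
    + exact (preimg_surj_of_continuous_retraction hf h hK Hcont).
Qed.
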